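(* For every formula $A$ of the language $\mathcal{L}^{\Box\triangle}$: $\mathsf{CS}\vdash A$ if and only if $\mathrm{labCS}^\infty\vdash A$.
   Context: Formulas ($\mathcal{L}^{\Box\triangle}$): fix a countable set $\mathtt{Prop}$ of propositional atoms; formulas are generated by $A ::= \bot \mid p \mid A \to A \mid \Box A \mid \triangle A$ with $p \in \mathtt{Prop}$. The logic $\mathsf{CS}$ is the smallest set of formulas containing all classical propositional tautologies and all instances of the schemas $\Box(A\to B)\to(\Box A\to\Box B)$, $\Box(\Box A\to A)\to\Box A$, $\Box A\to\triangle\Box A$, $\triangle(A\to B)\to(\triangle A\to\triangle B)$, $\triangle(\triangle A\to A)\to\triangle A$, $\triangle A\to\Box\triangle A$, and closed under modus ponens (from $A\to B$ and $A$ infer $B$) and the necessitation rules (from $A$ infer $\Box A$; from $A$ infer $\triangle A$). $\mathsf{CS}\vdash A$ means $A\in\mathsf{CS}$. Labelled sequents: fix a countable set $\mathtt{Lab}$ of labels. A labelled formula is $x:A$ with $x\in\mathtt{Lab}$ and $A$ a formula; a relational atom is $xRy$ or $xSy$ with $x,y \in \mathtt{Lab}$. A sequent $\mathcal{R},\Gamma\Rightarrow\Omega$ consists of a finite multiset $\mathcal{R}$ of relational atoms and finite multisets $\Gamma,\Omega$ of labelled formulas; commas denote multiset union. Rules of $\mathrm{labCS}^\infty$ (premisses above, conclusion below; $\mathcal{R},\Gamma,\Omega$ arbitrary): (Id) no premiss, conclusion $\mathcal{R},\Gamma,x:p\Rightarrow x:p,\Omega$ with $p\in\mathtt{Prop}$;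 ($\bot$) no premiss, conclusion $\mathcal{R},\Gamma,x:\bot\Rightarrow\Omega$; ($\to$R) from $\mathcal{R},\Gamma,x:A\Rightarrow x:B,\Omega$ infer $\mathcal{R},\Gamma\Rightarrow x:A\to B,\Omega$; ($\to$L) from $\mathcal{R},\Gamma\Rightarrow x:A,\Omega$ and $\mathcal{R},\Gamma,x:B\Rightarrow\Omega$ infer $\mathcal{R},\Gamma,x:A\to B\Rightarrow\Omega$; ($\Box$R) from $\mathcal{R},xRy,\Gamma\Rightarrow y:A,\Omega$ infer $\mathcal{R},\Gamma\Rightarrow x:\Box A,\Omega$, provided $y$ does not occur in the conclusion; ($\Box$L) from $\mathcal{R},xRy,x:\Box A,y:A,\Gamma\Rightarrow\Omega$ infer $\mathcal{R},xRy,x:\Box A,\Gamma\Rightarrow\Omega$; ($\triangle$R) from $\mathcal{R},xSy,\Gamma\Rightarrow y:A,\Omega$ infer $\mathcal{R},\Gamma\Rightarrow x:\triangle A,\Omega$, provided $y$ does not occur in the conclusion; ($\triangle$L) from $\mathcal{R},xSy,x:\triangle A,y:A,\Gamma\Rightarrow\Omega$ infer $\mathcal{R},xSy,x:\triangle A,\Gamma\Rightarrow\Omega$; ($\mathrm{trans}_{\circ\bullet}$, for each $\circ,\bullet\in\{R,S\}$) from $\mathcal{R},x\circ y,y\bullet z,x\bullet z,\Gamma\Rightarrow\Omega$ infer $\mathcal{R},x\circ y,y\bullet z,\Gamma\Rightarrow\Omega$. Proofs: a pre-proof is a possibly infinite tree of sequents in which each node is the conclusion of an instance of a rule whose premisses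 are exactly its children. A trace along an infinite branch $(\mathfrak{S}_i)_{i<\omega}$ with $\mathfrak{S}_i=\mathcal{R}_i,\Gamma_i\Rightarrow\Omega_i$ is a sequence of labels $(x_i)_{i<\omega}$ such that for each $i$: $x_{i+1}=x_i$, or $x_iRx_{i+1}\in\mathcal{R}_i$, or $x_iSx_{i+1}\in\mathcal{R}_i$. A trace is progressing if it is not eventually constant; a branch is progressing if it has a progressing trace. A proof is a pre-proof in which every branch is either finite or progressing. For a formula $A$, $\mathrm{labCS}^\infty\vdash A$ means there is a proof whose root is the sequent $\Rightarrow x:A$ (empty $\mathcal{R}$ and $\Gamma$) for some label $x$. *)

From Stdlib Require Import List Permutation Arith.
Import ListNotations.

Inductive form : Type :=
| Bot : form
| Var : nat -> form
| Imp : form -> form -> form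
| Box : form -> form
| Tri : form -> form.

(* Classical propositional evaluation: atoms, Box- and Tri-formulas are treated
   as propositional atoms.  A formula is an instance of a classical
   propositional tautology iff it evaluates to true under every such valuation. *)
Fixpoint peval (v : form -> bool) (A : form) : bool :=
  match A with
  | Bot => false
  | Var p => v (Var p)
  | Imp B C => implb (peval v B) (peval v C)
  | Box B => v (Box B)
  | Tri B => v (Tri B)
  end.

Definition taut (A : form) : Prop := forall v, peval v A = true.

Inductive CS : form -> Prop :=
| CS_taut A : taut A -> CS A
| CS_KB A B : CS (Imp (Box (Imp A B)) (Imp (Box A) (Box B)))
| CS_GLB A : CS (Imp (Box (Imp (Box A) A)) (Box A))
| CS_BT A : CS (Imp (Box A) (Tri (Box A)))
| CS_KT A B : CS (Imp (Tri (Imp A B)) (Imp (Tri A) (Tri B)))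
| CS_GLT A : CS (Imp (Tri (Imp (Tri A) A)) (Tri A))
| CS_TB A : CS (Imp (Tri A) (Box (Tri A)))
| CS_MP A B : CS (Imp A B) -> CS A -> CS B
| CS_NecB A : CS A -> CS (Box A)
| CS_NecT A : CS A -> CS (Tri A).

Definition label := nat.
Definition lform := (label * form)%type.
Inductive rkind : Type := KR | KS.
Definition ratom := (rkind * label * label)%type.

Record sequent : Type := mkSeq {
  rels : list ratom;
  ante : list lform;
  succ : list lform }.

Definition seq_perm (s t : sequent) : Prop :=
  Permutation (rels s) (rels t) /\ Permutation (ante s) (ante t) /\
  Permutation (succ s) (succ t).

Definition occurs (y : label) (s : sequent) : Prop :=
  (exists k a b, In (k, a, b) (rels s) /\ (y = a \/ y = b)) \/
  (exists A, In (y, A) (ante s)) \/ (exists A, In (y, A) (succ s)).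

Definition modal (k : rkind) (A : form) : form :=
  match k with KR => Box A | KS => Tri A end.

Inductive rule0 : sequent -> list sequent -> Prop :=
| r_id Rl G O x p :
    In (x, Var p) G -> In (x, Var p) O -> rule0 (mkSeq Rl G O) []
| r_bot Rl G O x :
    In (x, Bot) G -> rule0 (mkSeq Rl G O) []
| r_impR Rl G O O' x A B :
    Permutation O ((x, Imp A B) :: O') ->
    rule0 (mkSeq Rl G O) [mkSeq Rl ((x, A) :: G) ((x, B) :: O')]
| r_impL Rl G G' O x A B :
    Permutation G ((x, Imp A B) :: G') ->
    rule0 (mkSeq Rl G O) [mkSeq Rl G' ((x, A) :: O); mkSeq Rl ((x, B) :: G') O]
| r_modR (k : rkind) Rl G O O' x y A :
    Permutation O ((x, modal k A) :: O') ->
    ~ occurs y (mkSeq Rl G O) ->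
    rule0 (mkSeq Rl G O) [mkSeq ((k, x, y) :: Rl) G ((y, A) :: O')]
| r_modL (k : rkind) Rl G O x y A :
    In (k, x, y) Rl -> In (x, modal k A) G ->
    rule0 (mkSeq Rl G O) [mkSeq Rl ((y, A) :: G) O]
| r_trans (k1 k2 : rkind) Rl G O x y z :
    In (k1, x, y) Rl -> In (k2, y, z) Rl ->
    rule0 (mkSeq Rl G O) [mkSeq ((k2, x, z) :: Rl) G O].

Definition rule (c : sequent) (ps : list sequent) : Prop :=
  exists ps0, rule0 c ps0 /\ Forall2 seq_perm ps ps0.

CoInductive tree : Type := Node : sequent -> list tree -> tree.

Definition root (t : tree) : sequent := match t with Node s _ => s end.
Definition children (t : tree) : list tree := match t with Node _ ts => ts end.

CoInductive preproof : tree -> Prop :=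
| pp_node s ts :
    rule s (map root ts) -> (forall t, In t ts -> preproof t) ->
    preproof (Node s ts).

Definition branch (t : tree) (b : nat -> tree) : Prop :=
  b 0 = t /\ forall i, In (b (S i)) (children (b i)).

Definition trace (b : nat -> tree) (x : nat -> label) : Prop :=
  forall i, x (S i) = x i \/ exists k, In (k, x i, x (S i)) (rels (root (b i))).

Definition progressing (x : nat -> label) : Prop :=
  ~ (exists n, forall m, n <= m -> x m = x n).

Definition is_proof (t : tree) : Prop :=
  preproof t /\
  forall b, branch t b -> exists x, trace b x /\ progressing x.

Definition labCS_provable (A : form) : Prop :=
  exists t x, is_proof t /\ root t = mkSeq [] [] [(x, A)].

(* Both calculi coincide with validity on frames where [R] and [S] are mixed-transitive
   and [R ∪ S] is conversely well-founded.

   [CS] is sound by induction on derivations, Löb's axioms holding by well-founded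
   induction; it is complete by a finite canonical model on the subformulas of [A], whose
   relation is required to add a new modal formula at each step, hence has no infinite
   chains.

   A countermodel of the root of a [labCS∞] pre-proof can be pushed up along a branch,
   interpreting fresh labels by witnesses; a progressing trace on that branch would then
   climb forever in a conversely well-founded frame.  Conversely, run a fair proof search
   on [A] (a queue of rule applications; fresh labels increase along relational atoms).
   If a leaf gets stuck, or a branch has no progressing trace, the atoms accumulated
   along it define a countermodel on labels.  It is conversely well-founded: an infinite
   chain of relational atoms would exceed the labels of a stuck leaf, and on an infinite
   branch it could be followed by a progressing trace. *)

From Stdlib Require Import List Permutation Arith Lia Bool Wellfounded.
From Stdlib Require Import Classical ClassicalEpsilon.
Import ListNotations.

(** * Kripke semantics *)

Fixpoint forces {W : Type} (Rel : rkind -> W -> W -> Prop) (V : nat -> W -> Prop)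
  (w : W) (A : form) : Prop :=
  match A with
  | Bot => False
  | Var p => V p w
  | Imp B C => forces Rel V w B -> forces Rel V w C
  | Box B => forall u, Rel KR w u -> forces Rel V u B
  | Tri B => forall u, Rel KS w u -> forces Rel V u B
  end.

(* The mixed transitivity mirrors the rules [trans_{∘•}]. *)
Definition cs_frame {W : Type} (Rel : rkind -> W -> W -> Prop) : Prop :=
  (forall k1 k2 x y z, Rel k1 x y -> Rel k2 y z -> Rel k2 x z) /\
  well_founded (fun a b => exists k, Rel k b a).

Definition valid (A : form) : Prop :=
  forall (W : Type) (Rel : rkind -> W -> W -> Prop) (V : nat -> W -> Prop),
    cs_frame Rel -> forall w, forces Rel V w A.

Lemma forces_modal {W} Rel V (w : W) k A :
  forces Rel V w (modal k A) <-> forall u, Rel k w u -> forces Rel V u A.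
Proof. destruct k; simpl; tauto. Qed.

(** * Soundness of [CS] *)

Definition truth_valuation {W} Rel V (w : W) (B : form) : bool :=
  if excluded_middle_informative (forces Rel V w B) then true else false.

Lemma peval_truth_valuation {W} Rel V (w : W) A :
  peval (truth_valuation Rel V w) A = true <-> forces Rel V w A.
Proof.
  unfold truth_valuation.
  induction A; simpl;
    try (destruct excluded_middle_informative; intuition congruence).
  - intuition congruence.
  - split; intro H.
    + intro HA. apply IHA2. apply IHA1 in HA. rewrite HA in H. exact H.
    + destruct (peval _ A1) eqn:E1; simpl; auto.
      apply IHA2, H, IHA1; reflexivity.
Qed.

Lemma forces_lob {W} (Rel : rkind -> W -> W -> Prop) V k A w :
  cs_frame Rel ->
  (forall u, Rel k w u -> (forall v, Rel k u v -> forces Rel V v A) -> forces Rel V u A) ->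
  forall u, Rel k w u -> forces Rel V u A.
Proof.
  intros [Htrans Hwf] H u.
  induction (Hwf u) as [u _ IH]. intros Hwu.
  apply H; auto. intros v Huv. apply IH; [exists k | eapply Htrans]; eauto.
Qed.

Lemma CS_sound A : CS A -> valid A.
Proof.
  intros HA W Rel V Hfr. induction HA; intro w; simpl in *.
  - apply peval_truth_valuation, H.
  - intros H1 H2 u Hu. apply H1; auto.
  - intros H u Hu. eapply (forces_lob _ _ KR); eauto.
  - intros H u Hu v Hv. apply H. eapply (proj1 Hfr); eauto.
  - intros H1 H2 u Hu. apply H1; auto.
  - intros H u Hu. eapply (forces_lob _ _ KS); eauto.
  - intros H u Hu v Hv. apply H. eapply (proj1 Hfr); eauto.
  - apply IHHA1, IHHA2.
  - intros; apply IHHA.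
  - intros; apply IHHA.
Qed.

(** * Derived rules of [CS] *)

Definition Neg A := Imp A Bot.
Definition And A B := Neg (Imp A (Neg B)).
Definition imps (l : list form) (A : form) : form := fold_right Imp A l.

Lemma peval_imps v l A :
  peval v (imps l A) = true <-> ((forall B, In B l -> peval v B = true) -> peval v A = true).
Proof.
  induction l as [|C l IH]; simpl.
  - split; [auto | intros H; apply H; tauto].
  - destruct (peval v C) eqn:E; simpl.
    + rewrite IH. split.
      * intros H1 H2. apply H1. intros; apply H2; auto.
      * intros H1 H2. apply H1. intros B [<-|HB]; auto.
    + split; auto. intros _ H. rewrite (H C (or_introl eq_refl)) in E. discriminate.
Qed.

Ltac solve_taut :=
  unfold taut; intros;
  repeat match goal with H : _ = true |- _ => revert H end;
  simpl;
  repeat match goal with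
         | |- context [peval ?v ?A] => destruct (peval v A)
         | |- context [?v ?A] => lazymatch type of v with form -> bool => destruct (v A) end
         end;
  simpl; auto; try discriminate.

Lemma CS_taut_consequence X Y :
  CS X -> (forall v, peval v X = true -> peval v Y = true) -> CS Y.
Proof.
  intros HX H. apply (CS_MP X Y); auto. apply CS_taut. intro v. simpl.
  destruct (peval v X) eqn:E; simpl; auto.
Qed.

Lemma CS_taut_consequence2 X Y Z : CS X -> CS Y ->
  (forall v, peval v X = true -> peval v Y = true -> peval v Z = true) -> CS Z.
Proof.
  intros HX HY H. apply (CS_MP Y Z); auto. apply (CS_taut_consequence X); auto.
  intros v HXv. simpl. destruct (peval v Y) eqn:E; simpl; auto.
Qed.

Lemma CS_imp_trans A B C : CS (Imp A B) -> CS (Imp B C) -> CS (Imp A C).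
Proof. intros H1 H2. apply (CS_taut_consequence2 _ _ _ H1 H2). solve_taut. Qed.

Lemma CS_K k A B : CS (Imp (modal k (Imp A B)) (Imp (modal k A) (modal k B))).
Proof. destruct k; [apply CS_KB | apply CS_KT]. Qed.

Lemma CS_Nec k A : CS A -> CS (modal k A).
Proof. destruct k; [apply CS_NecB | apply CS_NecT]. Qed.

Lemma CS_Lob k A : CS (Imp (modal k (Imp (modal k A) A)) (modal k A)).
Proof. destruct k; [apply CS_GLB | apply CS_GLT]. Qed.

Lemma CS_modal_mono k A B : CS (Imp A B) -> CS (Imp (modal k A) (modal k B)).
Proof. intros H. apply (CS_MP (modal k (Imp A B))); [apply CS_K | apply CS_Nec, H]. Qed.

(* Löb's axiom for [D := C /\ modal k C] yields transitivity. *)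
Lemma CS_four k C : CS (Imp (modal k C) (modal k (modal k C))).
Proof.
  set (D := And C (modal k C)).
  assert (HD_C : CS (Imp (modal k D) (modal k C)))
    by (apply CS_modal_mono, CS_taut; unfold D, And, Neg; solve_taut).
  assert (HC_D : CS (Imp C (Imp (modal k D) D)))
    by (apply (CS_taut_consequence _ _ HD_C); unfold D, And, Neg; solve_taut).
  assert (HD_CC : CS (Imp (modal k D) (modal k (modal k C))))
    by (apply CS_modal_mono, CS_taut; unfold D, And, Neg; solve_taut).
  eapply CS_imp_trans; [eapply CS_imp_trans; [apply CS_modal_mono, HC_D | apply CS_Lob] | exact HD_CC].
Qed.

Lemma CS_K_imps k l D :
  CS (Imp (modal k (imps l D)) (imps (map (modal k) l) (modal k D))).
Proof.
  induction l as [|C l IH]; simpl.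
  - apply CS_taut; solve_taut.
  - apply (CS_taut_consequence2 _ _ _ (CS_K k C (imps l D)) IH). solve_taut.
Qed.

Lemma CS_imps_modal k l D : CS (imps l D) -> CS (imps (map (modal k) l) (modal k D)).
Proof. intros H. eapply CS_MP; [apply CS_K_imps | apply CS_Nec, H]. Qed.

Definition derives (G : list form) (A : form) : Prop := CS (imps G A).

Definition consistent (G : list form) : Prop := ~ derives G Bot.

Lemma derives_weaken G D A : incl G D -> derives G A -> derives D A.
Proof.
  intros Hincl H. apply (CS_taut_consequence _ _ H). intros v HG. apply peval_imps. intros HD.
  apply (proj1 (peval_imps v G _) HG). auto.
Qed.

Lemma derives_hyp G A : In A G -> derives G A.
Proof. intros H. apply CS_taut. intro v. apply peval_imps. auto. Qed.

Lemma derives_thm G A : CS A -> derives G A.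
Proof. intros H. apply (CS_taut_consequence _ _ H). intros v E. apply peval_imps. auto. Qed.

Lemma derives_mp G A B : derives G (Imp A B) -> derives G A -> derives G B.
Proof.
  intros H1 H2. apply (CS_taut_consequence2 _ _ _ H1 H2). intros v E1 E2.
  apply peval_imps. intros HG.
  pose proof (proj1 (peval_imps v G _) E1 HG) as E1'.
  pose proof (proj1 (peval_imps v G _) E2 HG) as E2'.
  simpl in E1'. rewrite E2' in E1'. exact E1'.
Qed.

Lemma derives_thm_mp G A B : derives G A -> CS (Imp A B) -> derives G B.
Proof. intros H1 H2. eapply derives_mp; [apply derives_thm, H2 | exact H1]. Qed.

Lemma derives_cut G D A : (forall B, In B D -> derives G B) -> CS (imps D A) -> derives G A.
Proof.
  intros HD H. apply derives_thm with (G := G) in H.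
  induction D as [|B D IH]; simpl in *; auto.
  apply IH; [intros; apply HD; auto|]. eapply derives_mp; [exact H | apply HD; auto].
Qed.

Lemma derives_reductio G B C : derives (Neg C :: B :: G) Bot -> derives G (Imp B C).
Proof.
  intros H. apply (CS_taut_consequence _ _ H). intros v E. apply peval_imps. intros HG.
  pose proof (proj1 (peval_imps v _ Bot) E) as E'. simpl in E' |- *.
  destruct (peval v B) eqn:HB; [| reflexivity]. destruct (peval v C) eqn:HC; [reflexivity |].
  discriminate E'. intros D [<-|[<-|HD]]; simpl; [rewrite HC | | apply HG]; auto.
Qed.

Lemma consistent_extend G A : consistent G -> derives (A :: G) Bot -> consistent (Neg A :: G).
Proof.
  intros Hc H1 H2. apply Hc. apply (CS_taut_consequence2 _ _ _ H1 H2). unfold Neg. simpl.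
  intros v. destruct (peval v A), (peval v (imps G Bot)); simpl; auto.
Qed.

(** * Completeness of [CS] via a finite canonical model *)

Definition form_eq_dec : forall A B : form, {A = B} + {A <> B}.
Proof. decide equality; apply Nat.eq_dec. Defined.

Fixpoint subforms (A : form) : list form :=
  A :: match A with
       | Bot | Var _ => []
       | Imp B C => subforms B ++ subforms C
       | Box B | Tri B => subforms B
       end.

Lemma subforms_refl A : In A (subforms A).
Proof. destruct A; simpl; auto. Qed.

Lemma subforms_trans A B : In B (subforms A) -> incl (subforms B) (subforms A).
Proof.
  induction A; simpl; intros [<-|H]; try apply incl_refl; try contradiction;
    intros D HD; right; [| apply IHA; auto ..].
  apply in_app_or in H as [H|H]; apply in_or_app; [left; apply IHA1 | right; apply IHA2]; auto.
Qed.

Definition subformula_closed (cl : list form) : Prop :=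
  (forall B C, In (Imp B C) cl -> In B cl /\ In C cl) /\
  (forall k B, In (modal k B) cl -> In B cl).

Lemma subforms_closed A : subformula_closed (subforms A).
Proof.
  split.
  - intros B C H. apply subforms_trans in H.
    split; apply H; simpl; right; apply in_or_app; [left | right]; apply subforms_refl.
  - intros k B H. apply subforms_trans in H. apply H.
    destruct k; simpl; right; apply subforms_refl.
Qed.

(* A canonical world over [cl] is the part [w] of [cl] it satisfies, and is
   described on [cl] by the literals it determines. *)
Definition literals (cl w : list form) : list form :=
  map (fun A => if in_dec form_eq_dec A w then A else Neg A) cl.

Definition cl_world (cl w : list form) : Prop := incl w cl /\ consistent (literals cl w).

Lemma literals_pos cl w A : In A cl -> In A w -> In A (literals cl w).
Proof. intros. apply in_map_iff. exists A. destruct in_dec; tauto. Qed.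

Lemma literals_neg cl w A : In A cl -> ~ In A w -> In (Neg A) (literals cl w).
Proof. intros. apply in_map_iff. exists A. destruct in_dec; tauto. Qed.

Lemma cl_world_derives_closed cl w A :
  cl_world cl w -> In A cl -> derives (literals cl w) A -> In A w.
Proof.
  intros [_ Hc] HA H. destruct (in_dec form_eq_dec A w) as [|N]; auto. exfalso. apply Hc.
  apply (derives_mp _ A); [apply derives_hyp, literals_neg |]; auto.
Qed.

Lemma consistent_incl G D : incl G D -> consistent D -> consistent G.
Proof. intros Hincl Hc H. apply Hc. eapply derives_weaken; eauto. Qed.

Lemma literals_cons_notin cl w A :
  ~ In A w -> literals (A :: cl) w = Neg A :: literals cl w.
Proof. intros HA. simpl. destruct in_dec; [contradiction | reflexivity]. Qed.

Lemma literals_cons_in cl w A : incl (literals (A :: cl) (A :: w)) (A :: literals cl w).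
Proof.
  intros L HL. apply in_map_iff in HL as [B [<- HB]].
  destruct (form_eq_dec B A) as [->|NBA]; [destruct in_dec as [_|N]; [left; auto | now destruct N; left] |].
  destruct HB as [->|HB]; [contradiction |]. right.
  destruct in_dec as [[->|Hw]|N]; [contradiction | apply literals_pos; auto |].
  apply literals_neg; auto. intros Hw. apply N. right; auto.
Qed.

Lemma lindenbaum cl G : consistent G -> exists w, incl w cl /\ consistent (G ++ literals cl w).
Proof.
  revert G. induction cl as [|A cl IH]; intros G Hc.
  - exists []. split; [intros ? [] | now rewrite app_nil_r].
  - destruct (classic (derives (A :: G) Bot)) as [HA|HA].
    + destruct (IH _ (consistent_extend G A Hc HA)) as [w [Hw Hcw]].
      assert (HAw : ~ In A w).
      { intros HAw. apply Hcw. apply (derives_mp _ A); apply derives_hyp;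
          [left | right; apply in_or_app; right; apply literals_pos]; auto. }
      exists w. split; [intros B HB; right; auto |].
      refine (consistent_incl _ _ _ Hcw). rewrite literals_cons_notin by exact HAw.
      intros L HL. apply in_app_or in HL as [HL|[<-|HL]]; simpl; auto using in_or_app.
    + destruct (IH _ HA) as [w [Hw Hcw]].
      exists (A :: w). split; [intros B [<-|HB]; simpl; auto |].
      refine (consistent_incl _ _ _ Hcw). intros L HL.
      apply in_app_or in HL as [HL|HL]; [right; auto using in_or_app |].
      apply literals_cons_in in HL as [<-|HL]; [left | right]; auto using in_or_app.
Qed.

Lemma lindenbaum_world cl G w : incl w cl -> consistent (G ++ literals cl w) -> cl_world cl w.
Proof.
  intros Hw Hc. split; [exact Hw |].
  refine (consistent_incl _ _ _ Hc). intros ? ?. apply in_or_app; auto.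
Qed.

Lemma lindenbaum_in cl G w A : consistent (G ++ literals cl w) -> In A G -> In A cl -> In A w.
Proof.
  intros Hc HG Hcl. destruct (in_dec form_eq_dec A w) as [|N]; auto. exfalso. apply Hc.
  apply (derives_mp _ A); apply derives_hyp, in_or_app; [right; apply literals_neg | left]; auto.
Qed.

Lemma lindenbaum_notin cl G w A :
  consistent (G ++ literals cl w) -> In (Neg A) G -> In A cl -> ~ In A w.
Proof.
  intros Hc HG Hcl HA. apply Hc.
  apply (derives_mp _ A); apply derives_hyp, in_or_app; [left | right; apply literals_pos]; auto.
Qed.

(* The last clause makes the canonical relation conversely well-founded: along it the
   finite set of modal formulas of [cl] that hold grows strictly. *)
Definition canon_rel (k : rkind) (w v : list form) : Prop :=
  (forall C, In (modal k C) w -> In C v) /\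
  (forall k' C, In (modal k' C) w -> In (modal k' C) v) /\
  (exists k' C, In (modal k' C) v /\ ~ In (modal k' C) w).

Lemma canon_rel_trans k1 k2 x y z : canon_rel k1 x y -> canon_rel k2 y z -> canon_rel k2 x z.
Proof.
  intros [_ [Hxy [k [C [HCy HCx]]]]] [Hyz1 [Hyz2 _]].
  split; [|split]; auto. exists k, C. auto.
Qed.

Definition is_modalb (D : form) : bool :=
  match D with Box _ | Tri _ => true | _ => false end.

Lemma is_modalb_spec D : is_modalb D = true <-> exists k C, D = modal k C.
Proof.
  split.
  - destruct D; simpl; try discriminate; intros _; [exists KR | exists KS]; eexists; reflexivity.
  - intros [[] [C ->]]; reflexivity.
Qed.

Definition missing_modals (cl w : list form) : nat :=
  length (filter (fun D => is_modalb D && negb (if in_dec form_eq_dec D w then true else false)) cl).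

Lemma filter_length_le {T} (p q : T -> bool) l :
  (forall x, In x l -> q x = true -> p x = true) -> length (filter q l) <= length (filter p l).
Proof.
  induction l as [|a l IH]; simpl; auto. intros H.
  destruct (q a) eqn:E; [rewrite (H a (or_introl eq_refl) E) | destruct (p a)]; simpl;
    [apply le_n_S | apply le_S |]; apply IH; auto.
Qed.

Lemma filter_length_lt {T} (p q : T -> bool) l :
  (forall x, In x l -> q x = true -> p x = true) ->
  (exists x, In x l /\ p x = true /\ q x = false) ->
  length (filter q l) < length (filter p l).
Proof.
  induction l as [|a l IH]; simpl; intros H [x [Hx [Hp Hq]]]; [contradiction|].
  destruct Hx as [<-|Hx].
  - rewrite Hp, Hq. simpl. apply le_n_S, filter_length_le. auto.
  - destruct (q a) eqn:E.
    + rewrite (H a (or_introl eq_refl) E). simpl. apply le_n_S, IH; eauto.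
    + destruct (p a); simpl; [apply le_S |]; apply IH; eauto.
Qed.

Lemma canon_rel_missing_modals cl k w v :
  incl v cl -> canon_rel k w v -> missing_modals cl v < missing_modals cl w.
Proof.
  intros Hv [_ [Hwv [k' [C [HCv HCw]]]]]. apply filter_length_lt.
  - intros D _ HD. apply andb_true_iff in HD as [Hm HDv].
    apply andb_true_iff. split; auto.
    apply is_modalb_spec in Hm as [k'' [C' ->]].
    destruct (in_dec form_eq_dec (modal k'' C') w); auto.
    destruct in_dec; [discriminate | exfalso; auto].
  - exists (modal k' C). split; [auto|].
    assert (Hm : is_modalb (modal k' C) = true) by (destruct k'; reflexivity).
    rewrite Hm. simpl. do 2 destruct in_dec; easy.
Qed.

(* What [A] forces at every [k]-successor, by [4], [Box A -> Tri Box A] and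
   [Tri A -> Box Tri A]. *)
Definition successor_part (k : rkind) (A : form) : list form :=
  match A, k with
  | Box D, KR => [D; Box D]
  | Box D, KS => [Box D]
  | Tri D, KS => [D; Tri D]
  | Tri D, KR => [Tri D]
  | _, _ => []
  end.

Lemma successor_part_sound k A B : In B (successor_part k A) -> CS (Imp A (modal k B)).
Proof.
  destruct A, k; simpl; intros H; repeat destruct H as [<-|H]; try contradiction;
    first [apply CS_BT | apply CS_TB | apply (CS_four KR) | apply (CS_four KS)
          | apply CS_taut; solve_taut].
Qed.

Lemma successor_part_body k C w : In (modal k C) w -> In C (flat_map (successor_part k) w).
Proof. intros H. apply in_flat_map. exists (modal k C). destruct k; simpl; auto. Qed.

Lemma successor_part_modal k k' C w :
  In (modal k' C) w -> In (modal k' C) (flat_map (successor_part k) w).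
Proof. intros H. apply in_flat_map. exists (modal k' C). destruct k, k'; simpl; auto. Qed.

(* Löb's axiom lets the hypothesis [modal k C] be added to the successor. *)
Lemma successor_seed_consistent cl k C w : cl_world cl w ->
  In (modal k C) cl -> ~ In (modal k C) w ->
  consistent (Neg C :: modal k C :: flat_map (successor_part k) w).
Proof.
  intros Hw Hcl HCw Hinc. apply HCw.
  assert (Hsucc : derives (map (modal k) (flat_map (successor_part k) w)) (modal k C))
    by (eapply derives_thm_mp; [apply CS_imps_modal, derives_reductio, Hinc | apply CS_Lob]).
  apply (cl_world_derives_closed cl w); auto.
  refine (derives_cut _ _ _ _ Hsucc). intros B HB.
  apply in_map_iff in HB as [D [<- HD]]. apply in_flat_map in HD as [A [HA HD]].
  eapply derives_thm_mp; [apply derives_hyp, literals_pos; [apply Hw|]; exact HA |].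
  apply successor_part_sound, HD.
Qed.

Lemma canon_existence cl k C w : subformula_closed cl -> cl_world cl w ->
  In (modal k C) cl -> ~ In (modal k C) w ->
  exists v, cl_world cl v /\ canon_rel k w v /\ ~ In C v.
Proof.
  intros Hclo Hw Hcl HCw.
  destruct (lindenbaum cl _ (successor_seed_consistent cl k C w Hw Hcl HCw)) as [v [Hv Hcv]].
  assert (Hwcl : forall A, In A w -> In A cl) by apply Hw.
  exists v. split; [eapply lindenbaum_world; eauto |].
  split; [split; [|split] |].
  - intros D HD. eapply lindenbaum_in; [exact Hcv | right; right; apply successor_part_body; auto |].
    eapply (proj2 Hclo), Hwcl, HD.
  - intros k' D HD. eapply lindenbaum_in; [exact Hcv | right; right; apply successor_part_modal; auto |].
    apply Hwcl, HD.
  - exists k, C. split; auto. eapply lindenbaum_in; [exact Hcv | right; left |]; auto.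
  - eapply lindenbaum_notin; [exact Hcv | left; reflexivity | apply (proj2 Hclo) in Hcl; auto].
Qed.

Definition canon_world (cl : list form) := {w : list form | cl_world cl w}.

Definition canon_R (cl : list form) (k : rkind) (w v : canon_world cl) : Prop :=
  canon_rel k (proj1_sig w) (proj1_sig v).

Definition canon_V (cl : list form) (p : nat) (w : canon_world cl) : Prop :=
  In (Var p) (proj1_sig w).

Lemma canon_cs_frame cl : cs_frame (canon_R cl).
Proof.
  split.
  - intros k1 k2 x y z. apply canon_rel_trans.
  - apply (wf_incl _ _ (fun a b => missing_modals cl (proj1_sig a) < missing_modals cl (proj1_sig b))).
    + intros a b [k H]. apply (canon_rel_missing_modals cl k); auto. apply (proj2_sig a).
    + apply wf_inverse_image, lt_wf.
Qed.

Lemma canon_truth_modal cl k A : subformula_closed cl -> In (modal k A) cl ->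
  (forall w : canon_world cl, forces (canon_R cl) (canon_V cl) w A <-> In A (proj1_sig w)) ->
  forall w : canon_world cl,
  forces (canon_R cl) (canon_V cl) w (modal k A) <-> In (modal k A) (proj1_sig w).
Proof.
  intros Hclo HA IH [w Hw]. rewrite forces_modal. split.
  - intros H. apply NNPP. intros N.
    destruct (canon_existence cl k A w Hclo Hw HA N) as [v [Hv [Hwv HAv]]].
    apply HAv, (IH (exist _ v Hv)), H, Hwv.
  - intros H [v Hv] Hwv. apply IH, (proj1 Hwv), H.
Qed.

Lemma canon_truth cl : subformula_closed cl -> forall A, In A cl -> forall w : canon_world cl,
  forces (canon_R cl) (canon_V cl) w A <-> In A (proj1_sig w).
Proof.
  intros Hclo A. induction A; intros HA.
  - intros [w Hw]. simpl. split; [tauto|].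
    intros H. apply (proj2 Hw), derives_hyp, literals_pos; auto.
  - intros [w Hw]. unfold canon_V; simpl; tauto.
  - intros [w Hw]. destruct (proj1 Hclo _ _ HA) as [H1 H2]. simpl.
    rewrite (IHA1 H1 (exist _ w Hw)), (IHA2 H2 (exist _ w Hw)). simpl. split.
    + intros H. apply (cl_world_derives_closed cl w); auto.
      destruct (in_dec form_eq_dec A1 w) as [Y|N].
      * apply (derives_thm_mp _ A2); [apply derives_hyp, literals_pos; auto |].
        apply CS_taut; solve_taut.
      * apply (derives_thm_mp _ (Neg A1)); [apply derives_hyp, literals_neg; auto |].
        apply CS_taut; unfold Neg; solve_taut.
    + intros H Y. apply (cl_world_derives_closed cl w); auto.
      apply (derives_mp _ A1); apply derives_hyp, literals_pos; auto.
  - apply (canon_truth_modal cl KR); auto. apply IHA, (proj2 Hclo KR), HA.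
  - apply (canon_truth_modal cl KS); auto. apply IHA, (proj2 Hclo KS), HA.
Qed.

Lemma CS_complete A : valid A -> CS A.
Proof.
  intros HV. apply NNPP. intros HN.
  assert (Hc : consistent [Neg A]).
  { intros H. apply HN, (CS_taut_consequence _ _ H). unfold Neg; solve_taut. }
  destruct (lindenbaum (subforms A) _ Hc) as [w [Hw Hcw]].
  assert (Hworld : cl_world (subforms A) w) by (eapply lindenbaum_world; eauto).
  apply (lindenbaum_notin _ _ _ A Hcw (or_introl eq_refl) (subforms_refl A)).
  apply (canon_truth _ (subforms_closed A) A (subforms_refl A) (exist _ w Hworld)).
  apply HV, canon_cs_frame.
Qed.

(** * Soundness of [labCS∞] *)

Lemma dependent_choice_inv {X} (P : nat -> X -> Prop) (R : nat -> X -> X -> Prop) (x0 : X) :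
  (forall n x, P n x -> exists y, P (S n) y /\ R n x y) -> P 0 x0 ->
  exists f : nat -> X, f 0 = x0 /\ forall n, P n (f n) /\ R n (f n) (f (S n)).
Proof.
  intros Hstep H0.
  destruct (choice (fun (p : nat * X) y => P (fst p) (snd p) -> P (S (fst p)) y /\ R (fst p) (snd p) y))
    as [g Hg].
  { intros [n x]. destruct (classic (P n x)) as [HP|HP].
    - destruct (Hstep n x HP) as [y Hy]. exists y. auto.
    - exists x. simpl. tauto. }
  set (f := fix f n := match n with 0 => x0 | S n => g (n, f n) end).
  assert (HP : forall n, P n (f n)) by (induction n; [exact H0 | apply (Hg (n, f n)), IHn]).
  exists f. split; [reflexivity |]. intros n. split; [apply HP | apply (Hg (n, f n)), HP].
Qed.

Definition falsifies {W} (Rel : rkind -> W -> W -> Prop) V (f : label -> W) (s : sequent) : Prop :=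
  (forall k a b, In (k, a, b) (rels s) -> Rel k (f a) (f b)) /\
  (forall x A, In (x, A) (ante s) -> forces Rel V (f x) A) /\
  (forall x A, In (x, A) (succ s) -> ~ forces Rel V (f x) A).

Definition occurs_rel (z : label) (rl : list ratom) : Prop :=
  exists k a b, In (k, a, b) rl /\ (z = a \/ z = b).

Lemma perm_in {T} (l l' : list T) a : Permutation l l' -> In a l' -> In a l.
Proof. intros H. apply Permutation_in. symmetry. exact H. Qed.

Lemma falsifies_perm {W} Rel V (f : label -> W) s t :
  seq_perm s t -> falsifies Rel V f s -> falsifies Rel V f t.
Proof.
  intros (HR & HG & HO) (FR & FG & FO). repeat split; intros.
  - apply FR. eapply perm_in; eauto.
  - apply FG. eapply perm_in; eauto.
  - apply FO. eapply perm_in; eauto.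
Qed.

Definition update {W} (f : label -> W) (y : label) (u : W) : label -> W :=
  fun z => if Nat.eq_dec z y then u else f z.

Lemma falsifies_modR {W} Rel V (f : label -> W) k Rl G O O' x y A :
  Permutation O ((x, modal k A) :: O') -> ~ occurs y (mkSeq Rl G O) ->
  falsifies Rel V f (mkSeq Rl G O) ->
  exists u, falsifies Rel V (update f y u) (mkSeq ((k, x, y) :: Rl) G ((y, A) :: O')) /\
    forall z, occurs z (mkSeq Rl G O) -> update f y u z = f z.
Proof.
  intros HO Hy (FR & FG & FO).
  assert (Hx : In (x, modal k A) O) by (eapply perm_in; [exact HO | left; auto]).
  pose proof (FO _ _ Hx) as HxA. rewrite forces_modal in HxA.
  apply not_all_ex_not in HxA as [u Hu]. apply imply_to_and in Hu as [Hxu HuA].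
  assert (Hagree : forall z, occurs z (mkSeq Rl G O) -> update f y u z = f z).
  { intros z Hz. unfold update. destruct Nat.eq_dec; [subst; contradiction | reflexivity]. }
  assert (Hyu : update f y u y = u) by (unfold update; destruct Nat.eq_dec; congruence).
  exists u. split; [| exact Hagree]. repeat split; simpl.
  - intros k' a b [E|E].
    + injection E as <- <- <-. rewrite Hyu, Hagree; [exact Hxu |]. right; right; eauto.
    + rewrite !Hagree; [apply FR; auto | left; exists k', a, b; auto ..].
  - intros z C Hz. rewrite Hagree; [apply FG; auto | right; left; eauto].
  - intros z C [E|E].
    + injection E as <- <-. rewrite Hyu. exact HuA.
    + assert (In (z, C) O) by (eapply perm_in; [exact HO | right; auto]).
      rewrite Hagree; [apply FO; auto | right; right; eauto].
Qed.

Lemma rule0_falsifies {W} (Rel : rkind -> W -> W -> Prop) V f s ps :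
  cs_frame Rel -> rule0 s ps -> falsifies Rel V f s ->
  exists p f', In p ps /\ falsifies Rel V f' p /\
    (forall z, occurs_rel z (rels s) -> f' z = f z) /\ incl (rels s) (rels p).
Proof.
  intros Hfr Hr Hf. pose proof Hf as (FR & FG & FO). destruct Hr; simpl in *.
  - exfalso. apply (FO _ _ H0), FG, H.
  - exfalso. apply (FG _ _ H).
  - pose proof (FO _ _ (perm_in _ _ _ H (or_introl eq_refl))) as HAB. simpl in HAB.
    exists (mkSeq Rl ((x, A) :: G) ((x, B) :: O')), f.
    split; [left; auto | split; [| split; [auto | apply incl_refl]]].
    repeat split; simpl; auto.
    + intros y C [E|E]; [injection E as <- <-; tauto | auto].
    + intros y C [E|E]; [injection E as <- <-; tauto |].
      apply FO. eapply perm_in; [exact H | right; auto].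
  - pose proof (FG _ _ (perm_in _ _ _ H (or_introl eq_refl))) as HAB. simpl in HAB.
    assert (HG' : forall y C, In (y, C) G' -> forces Rel V (f y) C)
      by (intros y C Hy; apply FG; eapply perm_in; [exact H | right; auto]).
    destruct (classic (forces Rel V (f x) A)) as [HA|HA].
    + exists (mkSeq Rl ((x, B) :: G') O), f.
      split; [right; left; auto | split; [| split; [auto | apply incl_refl]]].
      repeat split; simpl; auto. intros y C [E|E]; [injection E as <- <-|]; auto.
    + exists (mkSeq Rl G' ((x, A) :: O)), f.
      split; [left; auto | split; [| split; [auto | apply incl_refl]]].
      repeat split; simpl; auto. intros y C [E|E]; [injection E as <- <-|]; auto.
  - destruct (falsifies_modR Rel V f k Rl G O O' x y A H H0 Hf) as [u [Hu Hagree]].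
    exists (mkSeq ((k, x, y) :: Rl) G ((y, A) :: O')), (update f y u).
    split; [left; auto | split; [exact Hu | split]].
    + intros z Hz. apply Hagree. left. exact Hz.
    + intros a Ha. right. exact Ha.
  - exists (mkSeq Rl ((y, A) :: G) O), f.
    split; [left; auto | split; [| split; [auto | apply incl_refl]]].
    repeat split; simpl; auto. intros z C [E|E]; [injection E as <- <- | auto].
    apply (proj1 (forces_modal _ _ _ _ _) (FG _ _ H0)), FR, H.
  - exists (mkSeq ((k2, x, z) :: Rl) G O), f.
    split; [left; auto | split; [| split; [auto | intros a Ha; right; exact Ha]]].
    repeat split; simpl; auto. intros k a b [E|E]; [injection E as <- <- <- | auto].
    eapply (proj1 Hfr); eauto.
Qed.

Lemma Forall2_in_r {A B} (P : A -> B -> Prop) l1 l2 b :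
  Forall2 P l1 l2 -> In b l2 -> exists a, In a l1 /\ P a b.
Proof.
  induction 1 as [|a' b' l1 l2 Hab _ IH]; simpl; [tauto |].
  intros [<-|Hb]; [eauto |]. destruct (IH Hb) as [a [? ?]]; eauto.
Qed.

Lemma preproof_falsified_child {W} (Rel : rkind -> W -> W -> Prop) V f t :
  cs_frame Rel -> preproof t -> falsifies Rel V f (root t) ->
  exists t' f', In t' (children t) /\ preproof t' /\ falsifies Rel V f' (root t') /\
    (forall z, occurs_rel z (rels (root t)) -> f' z = f z) /\
    incl (rels (root t)) (rels (root t')).
Proof.
  intros Hfr [s ts [ps0 [Hr Hperm]] Hch] Hf. simpl in *.
  destruct (rule0_falsifies Rel V f _ _ Hfr Hr Hf) as (p & f' & Hp & Hf' & Hagree & Hincl).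
  destruct (Forall2_in_r _ _ _ _ Hperm Hp) as [q [Hq [HRq [HGq HOq]]]].
  apply in_map_iff in Hq as [t' [<- Ht']].
  exists t', f'. split; [auto | split; [auto | split; [| split; [exact Hagree |]]]].
  - eapply falsifies_perm; [repeat split; symmetry; eauto | exact Hf'].
  - intros a Ha. eapply perm_in; [exact HRq | apply Hincl, Ha].
Qed.

Section ProgressingTrace.

Variables (W : Type) (Rel : rkind -> W -> W -> Prop).
Variables (rl : nat -> list ratom) (g : nat -> label -> W) (x : nat -> label).
Hypothesis rl_true : forall i k a b, In (k, a, b) (rl i) -> Rel k (g i a) (g i b).
Hypothesis g_agree : forall i z, occurs_rel z (rl i) -> g (S i) z = g i z.
Hypothesis rl_mono : forall i, incl (rl i) (rl (S i)).
Hypothesis x_trace : forall i, x (S i) = x i \/ exists k, In (k, x i, x (S i)) (rl i).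
Hypothesis x_progressing : progressing x.

Lemma progressing_next_move i : exists j, i <= j /\ x j = x i /\ x (S j) <> x j.
Proof.
  apply NNPP. intros Hnone. apply x_progressing. exists i. intros m Hm.
  replace m with (i + (m - i)) by lia. induction (m - i) as [|d IH]; [f_equal; lia |].
  rewrite Nat.add_succ_r. destruct (Nat.eq_dec (x (S (i + d))) (x (i + d))) as [E|E].
  - congruence.
  - exfalso. apply Hnone. exists (i + d). repeat split; auto. lia.
Qed.

Lemma occurs_rel_step i z : occurs_rel z (rl i) -> occurs_rel z (rl (S i)).
Proof. intros (k & a & b & Hab & E). exists k, a, b. split; [apply rl_mono |]; auto. Qed.

Lemma occurs_rel_stable i z d :
  occurs_rel z (rl i) -> occurs_rel z (rl (i + d)) /\ g (i + d) z = g i z.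
Proof.
  intros Hz. induction d as [|d [IHo IHg]]; [rewrite Nat.add_0_r; auto |].
  rewrite Nat.add_succ_r. split; [apply occurs_rel_step, IHo | rewrite g_agree; auto].
Qed.

(* Once the trace has moved, the worlds [g i (x i)] it visits form an ascending
   [Rel]-chain that moves infinitely often. *)
Lemma progressing_trace_acc w : Acc (fun a b => exists k, Rel k b a) w ->
  forall i, occurs_rel (x i) (rl i) -> g i (x i) <> w.
Proof.
  induction 1 as [w _ IH]. intros i Hi Hw.
  destruct (progressing_next_move i) as (j & Hij & Hxj & Hmove).
  destruct (x_trace j) as [|[k Hk]]; [contradiction |].
  destruct (occurs_rel_stable i (x i) (j - i) Hi) as [_ Hg].
  replace (i + (j - i)) with j in Hg by lia.
  assert (Hocc : occurs_rel (x (S j)) (rl j)) by (exists k, (x j), (x (S j)); auto).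
  apply (IH (g j (x (S j)))) with (i := S j).
  - exists k. rewrite <- Hw, <- Hg, <- Hxj. apply rl_true, Hk.
  - apply occurs_rel_step, Hocc.
  - apply g_agree, Hocc.
Qed.

Lemma progressing_trace_not_wf : ~ well_founded (fun a b => exists k, Rel k b a).
Proof.
  intros Hwf.
  destruct (progressing_next_move 0) as (j & _ & _ & Hmove).
  destruct (x_trace j) as [|[k Hk]]; [contradiction |].
  apply (progressing_trace_acc _ (Hwf (g (S j) (x (S j)))) (S j)); auto.
  apply occurs_rel_step. exists k, (x j), (x (S j)). auto.
Qed.

End ProgressingTrace.

Lemma labCS_sound A : labCS_provable A -> valid A.
Proof.
  intros (t & x0 & [Hpre Hbranch] & Hroot) W Rel V Hfr w.
  apply NNPP. intros HA.
  set (P := fun (_ : nat) (p : tree * (label -> W)) =>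
              preproof (fst p) /\ falsifies Rel V (snd p) (root (fst p))).
  set (Q := fun (_ : nat) (p p' : tree * (label -> W)) =>
              In (fst p') (children (fst p)) /\
              (forall z, occurs_rel z (rels (root (fst p))) -> snd p' z = snd p z) /\
              incl (rels (root (fst p))) (rels (root (fst p')))).
  destruct (dependent_choice_inv P Q (t, fun _ => w)) as (br & Hbr0 & Hbr).
  - intros n [t1 f1] [Hp Hf].
    destruct (preproof_falsified_child Rel V f1 t1 Hfr Hp Hf) as (t' & f' & ?).
    exists (t', f'). unfold P, Q. simpl. tauto.
  - split; [exact Hpre |]. simpl. rewrite Hroot.
    repeat split; simpl; try tauto. intros x A' [E|[]]. injection E as <- <-. exact HA.
  - destruct (Hbranch (fun i => fst (br i))) as (x & Htrace & Hprog).
    + split; [rewrite Hbr0; reflexivity | intros i; apply Hbr].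
    + apply (progressing_trace_not_wf W Rel (fun i => rels (root (fst (br i)))) (fun i => snd (br i)) x);
        try apply Hfr; auto; intros i; apply Hbr.
Qed.

(** * Completeness of [labCS∞] via fair proof search *)

Definition rkind_eq_dec : forall a b : rkind, {a = b} + {a <> b}.
Proof. decide equality. Defined.

Definition lform_eq_dec : forall a b : lform, {a = b} + {a <> b}.
Proof. decide equality; [apply form_eq_dec | apply Nat.eq_dec]. Defined.

Definition ratom_eq_dec : forall a b : ratom, {a = b} + {a <> b}.
Proof. decide equality; [| decide equality]; try apply Nat.eq_dec. apply rkind_eq_dec. Defined.

Fixpoint remove_one (a : lform) (l : list lform) : list lform :=
  match l with
  | [] => []
  | b :: l' => if lform_eq_dec a b then l' else b :: remove_one a l'
  end.

Lemma remove_one_perm a l : In a l -> Permutation l (a :: remove_one a l).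
Proof.
  induction l as [|b l IH]; simpl; [tauto |]. intros H.
  destruct (lform_eq_dec a b) as [->|N]; auto.
  destruct H as [->|H]; [congruence |].
  eapply perm_trans; [apply perm_skip, IH, H | apply perm_swap].
Qed.

Lemma in_remove_one b a l : In b l -> b <> a -> In b (remove_one a l).
Proof.
  induction l as [|c l IH]; simpl; auto.
  intros [->|H] N; destruct lform_eq_dec; simpl; subst; auto. congruence.
Qed.

Definition labels (s : sequent) : list label :=
  flat_map (fun r : ratom => let '(_, a, b) := r in [a; b]) (rels s) ++
  map fst (ante s) ++ map fst (succ s).

Definition fresh (s : sequent) : label := S (list_max (labels s)).

Lemma occurs_le_max y s : occurs y s -> y <= list_max (labels s).
Proof.
  intros H. assert (Hy : In y (labels s)).
  { unfold labels. apply in_or_app.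
    destruct H as [(k & a & b & H & E)|[[A H]|[A H]]].
    - left. apply in_flat_map. exists (k, a, b). destruct E; subst; simpl; auto.
    - right. apply in_or_app. left. apply in_map_iff. exists (y, A); auto.
    - right. apply in_or_app. right. apply in_map_iff. exists (y, A); auto. }
  pose proof (proj1 (list_max_le (labels s) _) (le_n _)) as Hall.
  rewrite Forall_forall in Hall. auto.
Qed.

Lemma fresh_not_occurs s : ~ occurs (fresh s) s.
Proof. intros H. apply occurs_le_max in H. unfold fresh in H. lia. Qed.

Inductive task : Type :=
| TImpL (x : label) (A B : form)
| TImpR (x : label) (A B : form)
| TModR (k : rkind) (x : label) (A : form)
| TModL (k : rkind) (x y : label) (A : form)
| TTrans (k1 k2 : rkind) (x y z : label).

Definition apply_task (s : sequent) (t : task) : option (list sequent) :=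
  let R := rels s in let G := ante s in let O := succ s in
  match t with
  | TImpL x A B =>
      if in_dec lform_eq_dec (x, Imp A B) G then
        Some [mkSeq R (remove_one (x, Imp A B) G) ((x, A) :: O);
              mkSeq R ((x, B) :: remove_one (x, Imp A B) G) O]
      else None
  | TImpR x A B =>
      if in_dec lform_eq_dec (x, Imp A B) O then
        Some [mkSeq R ((x, A) :: G) ((x, B) :: remove_one (x, Imp A B) O)]
      else None
  | TModR k x A =>
      if in_dec lform_eq_dec (x, modal k A) O then
        Some [mkSeq ((k, x, fresh s) :: R) G ((fresh s, A) :: remove_one (x, modal k A) O)]
      else None
  | TModL k x y A =>
      if in_dec ratom_eq_dec (k, x, y) R then
        if in_dec lform_eq_dec (x, modal k A) G then Some [mkSeq R ((y, A) :: G) O]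
        else None
      else None
  | TTrans k1 k2 x y z =>
      if in_dec ratom_eq_dec (k1, x, y) R then
        if in_dec ratom_eq_dec (k2, y, z) R then Some [mkSeq ((k2, x, z) :: R) G O]
        else None
      else None
  end.

Ltac destruct_in_dec :=
  repeat match goal with
         | |- context [in_dec ?d ?a ?l] => destruct (in_dec d a l)
         | H : context [in_dec ?d ?a ?l] |- _ => destruct (in_dec d a l)
         end;
  try discriminate; try contradiction.

Lemma apply_task_rule0 s t ps : apply_task s t = Some ps -> rule0 s ps.
Proof.
  destruct s as [R G O]. destruct t; simpl; intros H; destruct_in_dec;
    injection H as <-.
  - apply r_impL, remove_one_perm; auto.
  - apply r_impR, remove_one_perm; auto.
  - apply r_modR; [apply remove_one_perm; auto | apply fresh_not_occurs].
  - eapply r_modL; eauto.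
  - eapply r_trans; eauto.
Qed.

Lemma apply_task_length s t ps : apply_task s t = Some ps -> length ps <= 2.
Proof. destruct t; simpl; intros H; destruct_in_dec; injection H as <-; simpl; lia. Qed.

Definition is_bot (a : lform) : bool := match snd a with Bot => true | _ => false end.

Definition is_identity (O : list lform) (a : lform) : bool :=
  match snd a with
  | Var _ => if in_dec lform_eq_dec a O then true else false
  | _ => false
  end.

Definition is_initial (s : sequent) : bool :=
  existsb is_bot (ante s) || existsb (is_identity (succ s)) (ante s).

Lemma is_initial_rule0 s : is_initial s = true -> rule0 s [].
Proof.
  destruct s as [R G O]. unfold is_initial; simpl. intros H.
  apply orb_true_iff in H as [H|H]; apply existsb_exists in H as [[x F] [H1 H2]];
    unfold is_bot, is_identity in H2; simpl in H2; destruct F; try discriminate.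
  - eapply r_bot; eauto.
  - destruct in_dec; [eapply r_id; eauto | discriminate].
Qed.

Lemma not_initial_bot s x : is_initial s = false -> ~ In (x, Bot) (ante s).
Proof.
  unfold is_initial. intros H Hin. apply orb_false_iff in H as [H _].
  assert (existsb is_bot (ante s) = true) by (apply existsb_exists; exists (x, Bot); auto).
  congruence.
Qed.

Lemma not_initial_identity s x p :
  is_initial s = false -> In (x, Var p) (ante s) -> ~ In (x, Var p) (succ s).
Proof.
  unfold is_initial. intros H Hin Hs. apply orb_false_iff in H as [_ H].
  assert (existsb (is_identity (succ s)) (ante s) = true).
  { apply existsb_exists. exists (x, Var p). split; auto. unfold is_identity; simpl.
    destruct in_dec; tauto. }
  congruence.
Qed.

Definition ante_tasks (a : lform) : list task :=
  match a with (x, Imp A B) => [TImpL x A B] | _ => [] end.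

Definition succ_tasks (a : lform) : list task :=
  match a with
  | (x, Imp A B) => [TImpR x A B]
  | (x, Box A) => [TModR KR x A]
  | (x, Tri A) => [TModR KS x A]
  | _ => []
  end.

Definition modL_tasks (G : list lform) (r : ratom) : list task :=
  let '(k, x, y) := r in
  flat_map (fun a : lform => match snd a with Box A | Tri A => [TModL k x y A] | _ => [] end) G.

Definition trans_tasks (R : list ratom) (r : ratom) : list task :=
  let '(k1, x, y) := r in map (fun r' : ratom => let '(k2, _, z) := r' in TTrans k1 k2 x y z) R.

Definition tasks_of (s : sequent) : list task :=
  flat_map ante_tasks (ante s) ++ flat_map succ_tasks (succ s) ++
  flat_map (modL_tasks (ante s)) (rels s) ++ flat_map (trans_tasks (rels s)) (rels s).

Lemma tasks_of_impL s x A B : In (x, Imp A B) (ante s) -> In (TImpL x A B) (tasks_of s).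
Proof.
  intros H. apply in_or_app; left. apply in_flat_map. exists (x, Imp A B). simpl; auto.
Qed.

Lemma tasks_of_impR s x A B : In (x, Imp A B) (succ s) -> In (TImpR x A B) (tasks_of s).
Proof.
  intros H. apply in_or_app; right; apply in_or_app; left.
  apply in_flat_map. exists (x, Imp A B). simpl; auto.
Qed.

Lemma tasks_of_modR s k x A : In (x, modal k A) (succ s) -> In (TModR k x A) (tasks_of s).
Proof.
  intros H. apply in_or_app; right; apply in_or_app; left.
  apply in_flat_map. exists (x, modal k A). destruct k; simpl; auto.
Qed.

Lemma tasks_of_modL s k x y A : In (k, x, y) (rels s) -> In (x, modal k A) (ante s) ->
  In (TModL k x y A) (tasks_of s).
Proof.
  intros H1 H2. do 2 (apply in_or_app; right). apply in_or_app; left.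
  apply in_flat_map. exists (k, x, y). split; auto. apply in_flat_map.
  exists (x, modal k A). destruct k; simpl; auto.
Qed.

Lemma tasks_of_trans s k1 k2 x y z : In (k1, x, y) (rels s) -> In (k2, y, z) (rels s) ->
  In (TTrans k1 k2 x y z) (tasks_of s).
Proof.
  intros H1 H2. do 3 (apply in_or_app; right).
  apply in_flat_map. exists (k1, x, y). split; auto. apply in_map_iff. exists (k2, y, z). auto.
Qed.

(* The search applies the first applicable task of a queue; the inapplicable tasks
   before it are dropped, and every premiss re-queues all of its own tasks. *)
Fixpoint first_applicable (s : sequent) (q : list task) : option (list sequent * list task) :=
  match q with
  | [] => None
  | t :: q' => match apply_task s t with
               | Some ps => Some (ps, q')
               | None => first_applicable s q'
               end
  end.

Lemma first_applicable_some s q ps q' : first_applicable s q = Some (ps, q') ->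
  exists pre t, q = pre ++ t :: q' /\ (forall t', In t' pre -> apply_task s t' = None) /\
    apply_task s t = Some ps.
Proof.
  induction q as [|t q IH]; simpl; [discriminate |]. destruct (apply_task s t) eqn:E.
  - intros H. injection H as <- <-. exists [], t. simpl. tauto.
  - intros H. destruct (IH H) as (pre & t0 & -> & Hpre & Ht0). exists (t :: pre), t0.
    repeat split; auto. intros t' [<-|Ht']; auto.
Qed.

Lemma first_applicable_none s q : first_applicable s q = None ->
  forall t, In t q -> apply_task s t = None.
Proof.
  induction q as [|t q IH]; simpl; [tauto |]. destruct (apply_task s t) eqn:E; [discriminate |].
  intros H t' [<-|Ht']; auto.
Qed.

Definition state := (sequent * list task)%type.

Definition search_step (st : state) : option (list state) :=
  if is_initial (fst st) then Some []
  else match first_applicable (fst st) (snd st) with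
       | None => None
       | Some (ps, q') => Some (map (fun s' => (s', q' ++ tasks_of s')) ps)
       end.

CoFixpoint search_tree (st : state) : tree :=
  Node (fst st) (match search_step st with
                 | Some [a] => [search_tree a]
                 | Some [a; b] => [search_tree a; search_tree b]
                 | _ => []
                 end).

Lemma search_step_length st l : search_step st = Some l -> length l <= 2.
Proof.
  unfold search_step. destruct is_initial; [intros H; injection H as <-; simpl; lia |].
  destruct first_applicable as [[ps q']|] eqn:E; [|discriminate]. intros H; injection H as <-.
  rewrite length_map. apply first_applicable_some in E as (pre & t & _ & _ & E).
  eapply apply_task_length, E.
Qed.

Lemma children_search_tree st :
  children (search_tree st) = match search_step st with Some l => map search_tree l | None => [] end.
Proof.
  simpl. destruct (search_step st) as [l|] eqn:E; auto.
  apply search_step_length in E. destruct l as [|a [|b [|c l]]]; simpl in *; auto; lia.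
Qed.

Lemma search_step_rule0 st l : search_step st = Some l -> rule0 (fst st) (map fst l).
Proof.
  unfold search_step. destruct is_initial eqn:C.
  - intros H; injection H as <-. apply is_initial_rule0, C.
  - destruct first_applicable as [[ps q']|] eqn:E; [|discriminate]. intros H; injection H as <-.
    rewrite map_map, map_id. apply first_applicable_some in E as (pre & t & _ & _ & E).
    eapply apply_task_rule0, E.
Qed.

Lemma preproof_coind (P : tree -> Prop) :
  (forall t, P t -> rule (root t) (map root (children t)) /\ forall t', In t' (children t) -> P t') ->
  forall t, P t -> preproof t.
Proof.
  intros H. cofix CIH. intros [s ts] Ht.
  destruct (H _ Ht) as [H1 H2]. constructor; [exact H1 |].
  intros t' Ht'. apply CIH, H2, Ht'.
Qed.

(** * Runs of the search *)

Definition run (sg : nat -> state) : Prop :=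
  forall i, (exists l, search_step (sg i) = Some l /\ In (sg (S i)) l) \/
            (search_step (sg i) = None /\ sg (S i) = sg i).

Definition applied (sg : nat -> state) (t : task) (i : nat) : Prop :=
  exists ps, apply_task (fst (sg i)) t = Some ps /\ In (fst (sg (S i))) ps.

Section Run.

Variable sg : nat -> state.
Hypothesis sg_run : run sg.

Lemma run_not_initial i : is_initial (fst (sg i)) = false.
Proof.
  destruct (is_initial (fst (sg i))) eqn:E; auto. exfalso.
  destruct (sg_run i) as [(l & H1 & H2)|[H1 _]]; unfold search_step in H1; rewrite E in H1.
  - injection H1 as <-. exact H2.
  - discriminate.
Qed.

Lemma run_cases i :
  (sg (S i) = sg i /\ forall t, In t (snd (sg i)) -> apply_task (fst (sg i)) t = None) \/
  exists pre t q' ps, snd (sg i) = pre ++ t :: q' /\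
    (forall t', In t' pre -> apply_task (fst (sg i)) t' = None) /\
    apply_task (fst (sg i)) t = Some ps /\ In (fst (sg (S i))) ps /\
    snd (sg (S i)) = q' ++ tasks_of (fst (sg (S i))).
Proof.
  pose proof (run_not_initial i) as Hni.
  destruct (sg_run i) as [(l & H1 & H2)|[H1 H2]]; unfold search_step in H1; rewrite Hni in H1.
  - right. destruct first_applicable as [[ps q']|] eqn:E; [|discriminate].
    injection H1 as <-. apply first_applicable_some in E as (pre & t & Hq & Hpre & Ht).
    apply in_map_iff in H2 as [s' [<- Hin]].
    exists pre, t, q', ps. simpl. auto.
  - left. split; auto. destruct first_applicable as [[ps q']|] eqn:E; [discriminate |].
    apply first_applicable_none, E.
Qed.

Lemma run_moves i : sg (S i) = sg i \/ exists t, applied sg t i.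
Proof.
  destruct (run_cases i) as [[H _]|(pre & t & q' & ps & _ & _ & H1 & H2 & _)]; auto.
  right. exists t, ps. auto.
Qed.

Lemma run_tasks_queued : incl (tasks_of (fst (sg 0))) (snd (sg 0)) ->
  forall i, incl (tasks_of (fst (sg i))) (snd (sg i)).
Proof.
  intros H0 i. induction i as [|i IH]; auto.
  destruct (run_cases i) as [[H _]|(pre & t & q' & ps & _ & _ & _ & _ & H3)].
  - rewrite H; auto.
  - rewrite H3. intros a Ha. apply in_or_app; right; auto.
Qed.

(* A task at position [n] of the queue leaves it within [n + 1] steps. *)
Lemma run_fair n : forall i t, nth_error (snd (sg i)) n = Some t ->
  exists j, i <= j /\ (apply_task (fst (sg j)) t = None \/ applied sg t j).
Proof.
  induction n as [n IHn] using lt_wf_ind. intros i t Ht.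
  destruct (run_cases i) as [[_ H]|(pre & t0 & q' & ps & Hq & Hpre & H1 & H2 & H3)].
  - exists i. split; auto. left. apply H. eapply nth_error_In; eauto.
  - rewrite Hq in Ht. destruct (Nat.lt_ge_cases n (length pre)) as [L|L].
    + rewrite nth_error_app1 in Ht; auto. exists i. split; auto. left. apply Hpre.
      eapply nth_error_In; eauto.
    + rewrite nth_error_app2 in Ht; auto. destruct (n - length pre) as [|m] eqn:Em.
      * injection Ht as ->. exists i. split; auto. right. exists ps. auto.
      * destruct (IHn m ltac:(lia) (S i) t) as (j & Hj & Hj'); [|exists j; split; [lia | auto]].
        rewrite H3, nth_error_app1; auto. apply nth_error_Some. simpl in Ht. congruence.
Qed.

Lemma run_eventually_applied t i (P : nat -> Prop) : In t (snd (sg i)) -> P i ->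
  (forall j, P j -> apply_task (fst (sg j)) t <> None) ->
  (forall j, P j -> ~ P (S j) -> applied sg t j) -> exists m, applied sg t m.
Proof.
  intros Hin HP Happ Hleave. apply In_nth_error in Hin as [n Hn].
  destruct (run_fair n i t Hn) as (j & Hij & Hj).
  assert (Hd : exists d, j = i + d) by (exists (j - i); lia).
  destruct Hd as [d ->]. clear Hij Hn. revert i HP Hj. induction d as [|d IH]; intros i HP Hj.
  - rewrite Nat.add_0_r in Hj. destruct Hj as [Hj|Hj]; eauto. exfalso; eapply Happ; eauto.
  - destruct (classic (P (S i))) as [Y|N]; [| eauto].
    apply (IH (S i) Y). rewrite <- Nat.add_succ_comm in Hj. exact Hj.
Qed.

Lemma applied_effect t j : applied sg t j ->
  incl (rels (fst (sg j))) (rels (fst (sg (S j)))) /\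
  (forall a, In a (ante (fst (sg j))) -> In a (ante (fst (sg (S j)))) \/
     exists x A B, t = TImpL x A B /\ a = (x, Imp A B)) /\
  (forall a, In a (succ (fst (sg j))) -> In a (succ (fst (sg (S j)))) \/
     (exists x A B, t = TImpR x A B /\ a = (x, Imp A B)) \/
     (exists k x A, t = TModR k x A /\ a = (x, modal k A))).
Proof.
  intros [ps [H1 H2]]. destruct (fst (sg j)) as [R G O]. set (s' := fst (sg (S j))) in *.
  clearbody s'.
  destruct t; simpl in H1; destruct_in_dec; injection H1 as <-; simpl in H2;
    repeat destruct H2 as [<-|H2]; try contradiction; simpl;
    (split; [intros r Hr; simpl; auto | split]); intros a Ha; simpl; auto.
  - destruct (lform_eq_dec a (x, Imp A B)) as [->|N]; [right; eauto | left; apply in_remove_one; auto].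
  - destruct (lform_eq_dec a (x, Imp A B)) as [->|N]; [right; eauto | left; right; apply in_remove_one; auto].
  - destruct (lform_eq_dec a (x, Imp A B)) as [->|N]; [right; left; eauto | left; right; apply in_remove_one; auto].
  - destruct (lform_eq_dec a (x, modal k A)) as [->|N]; [right; right; eauto | left; right; apply in_remove_one; auto].
Qed.

Lemma run_rels_step j : incl (rels (fst (sg j))) (rels (fst (sg (S j)))).
Proof.
  destruct (run_moves j) as [E|[t Ht]]; [rewrite E; apply incl_refl | apply (applied_effect _ _ Ht)].
Qed.

Lemma run_rels_mono i j : i <= j -> incl (rels (fst (sg i))) (rels (fst (sg j))).
Proof.
  induction 1 as [|j _ IH]; [apply incl_refl |]. intros a Ha. apply run_rels_step, IH, Ha.
Qed.

Lemma run_leave_ante j a : In a (ante (fst (sg j))) -> ~ In a (ante (fst (sg (S j)))) ->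
  exists x A B, a = (x, Imp A B) /\ applied sg (TImpL x A B) j.
Proof.
  intros Ha Hna. destruct (run_moves j) as [E|[t Ht]]; [rewrite E in Hna; contradiction |].
  destruct (proj1 (proj2 (applied_effect _ _ Ht)) _ Ha) as [|(x & A & B & -> & ->)];
    [contradiction | eauto].
Qed.

Lemma run_leave_succ j a : In a (succ (fst (sg j))) -> ~ In a (succ (fst (sg (S j)))) ->
  (exists x A B, a = (x, Imp A B) /\ applied sg (TImpR x A B) j) \/
  (exists k x A, a = (x, modal k A) /\ applied sg (TModR k x A) j).
Proof.
  intros Ha Hna. destruct (run_moves j) as [E|[t Ht]]; [rewrite E in Hna; contradiction |].
  destruct (proj2 (proj2 (applied_effect _ _ Ht)) _ Ha)
    as [|[(x & A & B & -> & ->)|(k & x & A & -> & ->)]]; [contradiction | left | right]; eauto 6.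
Qed.

Lemma run_persist (sel : sequent -> list lform) a i :
  (forall j, In a (sel (fst (sg j))) -> In a (sel (fst (sg (S j))))) ->
  In a (sel (fst (sg i))) -> forall j, i <= j -> In a (sel (fst (sg j))).
Proof. intros Hstep Ha j. induction 1; auto. Qed.

Lemma run_ante_persist i x F : (forall A B, F <> Imp A B) ->
  In (x, F) (ante (fst (sg i))) -> forall j, i <= j -> In (x, F) (ante (fst (sg j))).
Proof.
  intros HF. apply run_persist. intros j Ha. apply NNPP. intros Hna.
  destruct (run_leave_ante j _ Ha Hna) as (x' & A & B & E & _). injection E as _ ->.
  eapply HF; eauto.
Qed.

Lemma run_var_persist i x p :
  In (x, Var p) (succ (fst (sg i))) -> forall j, i <= j -> In (x, Var p) (succ (fst (sg j))).
Proof.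
  apply run_persist. intros j Ha. apply NNPP. intros Hna.
  destruct (run_leave_succ j _ Ha Hna) as [(? & ? & ? & E & _)|([] & ? & ? & E & _)]; discriminate.
Qed.

Hypothesis sg_queued : incl (tasks_of (fst (sg 0))) (snd (sg 0)).

Lemma run_impL_decomposed i x A B : In (x, Imp A B) (ante (fst (sg i))) ->
  exists m, In (x, A) (succ (fst (sg m))) \/ In (x, B) (ante (fst (sg m))).
Proof.
  intros H.
  destruct (run_eventually_applied (TImpL x A B) i (fun n => In (x, Imp A B) (ante (fst (sg n)))))
    as (m & ps & Hps & Hin); auto.
  - apply run_tasks_queued, tasks_of_impL; auto.
  - intros n Hn. simpl. destruct_in_dec.
  - intros n Hn Hn'. destruct (run_leave_ante n _ Hn Hn') as (? & ? & ? & E & Happ).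
    injection E as <- <- <-. exact Happ.
  - exists (S m). simpl in Hps. destruct_in_dec. injection Hps as <-.
    destruct Hin as [<-|[<-|[]]]; simpl; auto.
Qed.

Lemma run_impR_decomposed i x A B : In (x, Imp A B) (succ (fst (sg i))) ->
  exists m, In (x, A) (ante (fst (sg m))) /\ In (x, B) (succ (fst (sg m))).
Proof.
  intros H.
  destruct (run_eventually_applied (TImpR x A B) i (fun n => In (x, Imp A B) (succ (fst (sg n)))))
    as (m & ps & Hps & Hin); auto.
  - apply run_tasks_queued, tasks_of_impR; auto.
  - intros n Hn. simpl. destruct_in_dec.
  - intros n Hn Hn'.
    destruct (run_leave_succ n _ Hn Hn') as [(? & ? & ? & E & Happ)|([] & ? & ? & E & _)];
      try discriminate. injection E as <- <- <-. exact Happ.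
  - exists (S m). simpl in Hps. destruct_in_dec. injection Hps as <-.
    destruct Hin as [<-|[]]; simpl; auto.
Qed.

Lemma run_modR_witness i k x A : In (x, modal k A) (succ (fst (sg i))) ->
  exists m y, In (k, x, y) (rels (fst (sg m))) /\ In (y, A) (succ (fst (sg m))).
Proof.
  intros H.
  destruct (run_eventually_applied (TModR k x A) i (fun n => In (x, modal k A) (succ (fst (sg n)))))
    as (m & ps & Hps & Hin); auto.
  - apply run_tasks_queued, tasks_of_modR; auto.
  - intros n Hn. simpl. destruct_in_dec.
  - intros n Hn Hn'.
    destruct (run_leave_succ n _ Hn Hn') as [(? & ? & ? & E & _)|(k' & ? & ? & E & Happ)];
      [destruct k; discriminate |].
    injection E as <- E. destruct k, k'; try discriminate; injection E as <-; exact Happ.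
  - exists (S m). simpl in Hps. destruct_in_dec. injection Hps as <-.
    destruct Hin as [<-|[]]; simpl; eauto.
Qed.

Lemma run_modL_propagates i j k x y A :
  In (x, modal k A) (ante (fst (sg i))) -> In (k, x, y) (rels (fst (sg j))) ->
  exists m, In (y, A) (ante (fst (sg m))).
Proof.
  intros Hi Hj. set (n0 := Nat.max i j).
  assert (Hx : forall n, n0 <= n -> In (x, modal k A) (ante (fst (sg n))))
    by (intros n Hn; apply (run_ante_persist i); [destruct k; discriminate | auto | lia]).
  assert (Hxy : forall n, n0 <= n -> In (k, x, y) (rels (fst (sg n))))
    by (intros n Hn; apply (run_rels_mono j); [lia | auto]).
  destruct (run_eventually_applied (TModL k x y A) n0 (fun n => n0 <= n))
    as (m & ps & Hps & Hin); auto.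
  - apply run_tasks_queued, tasks_of_modL; auto.
  - intros n Hn. simpl. destruct_in_dec; exfalso; auto.
  - intros n Hn Hn'. lia.
  - exists (S m). simpl in Hps. destruct_in_dec. injection Hps as <-.
    destruct Hin as [<-|[]]; simpl; auto.
Qed.

Lemma run_trans_closed i j k1 k2 x y z :
  In (k1, x, y) (rels (fst (sg i))) -> In (k2, y, z) (rels (fst (sg j))) ->
  exists m, In (k2, x, z) (rels (fst (sg m))).
Proof.
  intros Hi Hj. set (n0 := Nat.max i j).
  assert (Hxy : forall n, n0 <= n -> In (k1, x, y) (rels (fst (sg n))))
    by (intros n Hn; apply (run_rels_mono i); [lia | auto]).
  assert (Hyz : forall n, n0 <= n -> In (k2, y, z) (rels (fst (sg n))))
    by (intros n Hn; apply (run_rels_mono j); [lia | auto]).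
  destruct (run_eventually_applied (TTrans k1 k2 x y z) n0 (fun n => n0 <= n))
    as (m & ps & Hps & Hin); auto.
  - apply run_tasks_queued, tasks_of_trans; auto.
  - intros n Hn. simpl. destruct_in_dec; exfalso; auto.
  - intros n Hn Hn'. lia.
  - exists (S m). simpl in Hps. destruct_in_dec. injection Hps as <-.
    destruct Hin as [<-|[]]; simpl; auto.
Qed.

Definition run_R (k : rkind) (a b : label) : Prop := exists i, In (k, a, b) (rels (fst (sg i))).

Definition run_V (p : nat) (x : label) : Prop := exists i, In (x, Var p) (ante (fst (sg i))).

Lemma run_truth F : forall i x,
  (In (x, F) (ante (fst (sg i))) -> forces run_R run_V x F) /\
  (In (x, F) (succ (fst (sg i))) -> ~ forces run_R run_V x F).
Proof.
  assert (Hmodal : forall k A, (forall i x,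
     (In (x, A) (ante (fst (sg i))) -> forces run_R run_V x A) /\
     (In (x, A) (succ (fst (sg i))) -> ~ forces run_R run_V x A)) ->
     forall i x,
     (In (x, modal k A) (ante (fst (sg i))) -> forces run_R run_V x (modal k A)) /\
     (In (x, modal k A) (succ (fst (sg i))) -> ~ forces run_R run_V x (modal k A))).
  { intros k A IH i x. rewrite forces_modal. split.
    - intros H y [j Hj]. destruct (run_modL_propagates i j k x y A H Hj) as [m Hm].
      apply (IH m), Hm.
    - intros H Hx. destruct (run_modR_witness i k x A H) as (m & y & Hxy & Hy).
      apply (proj2 (IH m y) Hy), Hx. exists m. exact Hxy. }
  induction F as [| p | A IHA B IHB | A IHA | A IHA]; intros i x.
  - split; [| simpl; tauto]. intros H. exfalso. eapply not_initial_bot; eauto using run_not_initial.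
  - split; intros H; simpl; [exists i; auto |]. intros [j Hj].
    apply (not_initial_identity (fst (sg (Nat.max i j))) x p (run_not_initial _)).
    + apply (run_ante_persist j); [discriminate | auto | lia].
    + apply (run_var_persist i); [auto | lia].
  - split; intros H; simpl.
    + intros HA. destruct (run_impL_decomposed i x A B H) as [m [Hm|Hm]].
      * exfalso. apply (proj2 (IHA m x) Hm HA).
      * apply (proj1 (IHB m x) Hm).
    + destruct (run_impR_decomposed i x A B H) as (m & HmA & HmB). intros HAB.
      apply (proj2 (IHB m x) HmB), HAB, (proj1 (IHA m x) HmA).
  - apply (Hmodal KR A IHA).
  - apply (Hmodal KS A IHA).
Qed.

End Run.

Definition chain {W} (Rel : rkind -> W -> W -> Prop) (c : nat -> W) : Prop :=
  forall n, exists k, Rel k (c n) (c (S n)).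

Lemma wf_of_no_chain {W} (Rel : rkind -> W -> W -> Prop) :
  (forall c, ~ chain Rel c) -> well_founded (fun a b => exists k, Rel k b a).
Proof.
  intros Hnc a. apply NNPP. intros Ha.
  set (Racc := fun a b => exists k, Rel k b a).
  destruct (dependent_choice_inv (fun _ x => ~ Acc Racc x) (fun _ x y => exists k, Rel k x y) a)
    as (c & _ & Hc); auto.
  - intros _ x Hx. apply NNPP. intros Hnone. apply Hx. constructor. intros y [k Hy].
    apply NNPP. intros Hy'. apply Hnone. exists y. eauto.
  - apply (Hnc c). intros n. apply Hc.
Qed.

Lemma run_rels_increasing sg : run sg -> rels (fst (sg 0)) = [] ->
  forall i k a b, In (k, a, b) (rels (fst (sg i))) -> a < b.
Proof.
  intros Hrun H0 i. induction i as [|i IH]; intros k a b H; [rewrite H0 in H; contradiction |].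
  destruct (run_moves sg Hrun i) as [E|(t & ps & Hps & Hin)]; [rewrite E in H; eauto |].
  destruct (fst (sg i)) as [R G O]. simpl in IH.
  set (s' := fst (sg (S i))) in *. clearbody s'.
  destruct t; simpl in Hps; destruct_in_dec; injection Hps as <-; simpl in Hin;
    repeat destruct Hin as [<-|Hin]; try contradiction; simpl in H; eauto;
    destruct H as [E|H]; eauto; injection E as <- <- <-.
  - match goal with |- ?a < fresh ?s =>
      assert (Hocc : occurs a s) by (right; right; eauto) end.
    apply occurs_le_max in Hocc. unfold fresh. lia.
  - match goal with H1 : In (_, ?a, ?y) R, H2 : In (_, ?y, ?b) R |- ?a < ?b =>
      pose proof (IH _ _ _ H1); pose proof (IH _ _ _ H2) end. lia.
Qed.

Lemma run_cs_frame sg : run sg -> incl (tasks_of (fst (sg 0))) (snd (sg 0)) ->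
  (forall c, ~ chain (run_R sg) c) -> cs_frame (run_R sg).
Proof.
  intros Hrun Hq Hnc. split.
  - intros k1 k2 x y z [i Hi] [j Hj]. eapply run_trans_closed; eauto.
  - apply wf_of_no_chain, Hnc.
Qed.

Lemma run_refutes sg x0 A : run sg -> fst (sg 0) = mkSeq [] [] [(x0, A)] ->
  incl (tasks_of (fst (sg 0))) (snd (sg 0)) -> (forall c, ~ chain (run_R sg) c) -> ~ valid A.
Proof.
  intros Hrun H0 Hq Hnc HA.
  apply (proj2 (run_truth sg Hrun Hq A 0 x0)); [rewrite H0; left; auto |].
  apply HA, run_cs_frame; auto.
Qed.

(* The trace waits at [c p] until the atom leading to [c (p + 1)] has been added. *)
Lemma run_chain_progressing_trace sg c : run sg -> chain (run_R sg) c ->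
  (forall n, c n < c (S n)) ->
  exists x, (forall i, x (S i) = x i \/ exists k, In (k, x i, x (S i)) (rels (fst (sg i)))) /\
    progressing x.
Proof.
  intros Hrun Hc Hinc.
  set (edge := fun i n => exists k, In (k, c n, c (S n)) (rels (fst (sg i)))).
  set (pos := fix pos i := match i with
                           | 0 => 0
                           | S i => if excluded_middle_informative (edge i (pos i)) then S (pos i)
                                    else pos i
                           end).
  assert (Hc_lt : forall a b, a < b -> c a < c b)
    by (induction 1; [apply Hinc | specialize (Hinc m); lia]).
  assert (Hc_inj : forall a b, c a = c b -> a = b).
  { intros a b E. destruct (Nat.lt_total a b) as [L|[L|L]]; auto;
      apply Hc_lt in L; lia. }
  exists (fun i => c (pos i)). split.
  - intros i. cbn [pos]. destruct excluded_middle_informative as [[k Hk]|]; [right | left]; eauto.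
  - intros [n Hn].
    assert (Hpos : forall m, n <= m -> pos m = pos n) by (intros m Hm; apply Hc_inj, Hn, Hm).
    destruct (Hc (pos n)) as (k & i0 & Hi0).
    set (m := Nat.max n i0).
    assert (Hedge : edge m (pos m)).
    { exists k. rewrite (Hpos m) by lia. apply (run_rels_mono sg Hrun i0); [lia | exact Hi0]. }
    pose proof (Hpos (S m) ltac:(lia)) as E. cbn [pos] in E.
    destruct excluded_middle_informative; [| contradiction].
    rewrite (Hpos m) in E by lia. lia.
Qed.

Definition init_state (A : form) : state :=
  (mkSeq [] [] [(0, A)], tasks_of (mkSeq [] [] [(0, A)])).

Inductive reachable (A : form) : state -> Prop :=
| reachable_init : reachable A (init_state A)
| reachable_step st l st' :
    reachable A st -> search_step st = Some l -> In st' l -> reachable A st'.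

Lemma reachable_path A st : reachable A st ->
  exists sg n, sg 0 = init_state A /\
    (forall i, i < n -> exists l, search_step (sg i) = Some l /\ In (sg (S i)) l) /\
    (forall i, n <= i -> sg i = st).
Proof.
  induction 1 as [|st l st' _ (sg & n & H0 & Hpath & Hst) Hstep Hin].
  - exists (fun _ => init_state A), 0. repeat split; intros; lia.
  - exists (fun i => if i <=? n then sg i else st'), (S n). repeat split.
    + exact H0.
    + intros i Hi. destruct (Nat.eq_dec i n) as [->|N].
      * rewrite Nat.leb_refl, (proj2 (Nat.leb_gt (S n) n)), Hst by lia. eauto.
      * rewrite !(proj2 (Nat.leb_le _ n)) by lia. apply Hpath. lia.
    + intros i Hi. rewrite (proj2 (Nat.leb_gt i n)) by lia. reflexivity.
Qed.

Lemma reachable_not_stuck A st : valid A -> reachable A st -> search_step st <> None.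
Proof.
  intros HA Hst Hstuck.
  destruct (reachable_path A st Hst) as (sg & n & H0 & Hpath & Hend).
  assert (Hrun : run sg).
  { intros i. destruct (Nat.lt_ge_cases i n) as [L|L]; [left; auto |].
    right. rewrite !Hend by lia. auto. }
  apply (run_refutes sg 0 A Hrun); [rewrite H0; reflexivity | rewrite H0; apply incl_refl | | exact HA].
  intros c Hc.
  assert (Hlt := run_rels_increasing sg Hrun ltac:(rewrite H0; reflexivity)).
  assert (Hbound : forall i, incl (rels (fst (sg i))) (rels (fst st))).
  { intros i. rewrite <- (Hend (Nat.max i n)) by lia. apply run_rels_mono; auto. lia. }
  assert (Hinc : forall m, c m < c (S m))
    by (intros m; destruct (Hc m) as [k [i Hi]]; eapply Hlt; eauto).
  assert (Hge : forall m, m <= c m) by (induction m; [lia | specialize (Hinc m); lia]).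
  set (M := list_max (labels (fst st))).
  destruct (Hc M) as [k [i Hi]]. apply Hbound in Hi.
  assert (Hocc : occurs (c (S M)) (fst st)) by (left; exists k, (c M), (c (S M)); auto).
  apply occurs_le_max in Hocc. specialize (Hge (S M)). unfold M in *. lia.
Qed.

Lemma search_tree_child st t' : In t' (children (search_tree st)) ->
  exists st' l, search_step st = Some l /\ In st' l /\ t' = search_tree st'.
Proof.
  rewrite children_search_tree. destruct (search_step st) as [l|]; [| simpl; tauto].
  intros H. apply in_map_iff in H as [st' [<- H]]. eauto.
Qed.

Lemma search_branch_progressing A b : valid A -> branch (search_tree (init_state A)) b ->
  exists x, trace b x /\ progressing x.
Proof.
  intros HA [Hb0 Hbs]. apply NNPP. intros Hnot.
  destruct (dependent_choice_inv (fun i st => b i = search_tree st)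
              (fun _ st st' => exists l, search_step st = Some l /\ In st' l) (init_state A))
    as (sg & H0 & Hsg); auto.
  - intros i st Hi. specialize (Hbs i). rewrite Hi in Hbs.
    destruct (search_tree_child _ _ Hbs) as (st' & l & Hl & Hin & ->). eauto.
  - assert (Hrun : run sg) by (intros i; left; apply Hsg).
    apply (run_refutes sg 0 A Hrun); [rewrite H0; reflexivity | rewrite H0; apply incl_refl | | exact HA].
    intros c Hc. apply Hnot.
    assert (Hlt := run_rels_increasing sg Hrun ltac:(rewrite H0; reflexivity)).
    destruct (run_chain_progressing_trace sg c Hrun Hc) as (x & Hx & Hprog).
    + intros m. destruct (Hc m) as [k [i Hi]]. eapply Hlt; eauto.
    + exists x. split; auto. intros i. rewrite (proj1 (Hsg i)). apply Hx.
Qed.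

Lemma Forall2_seq_perm_refl l : Forall2 seq_perm l l.
Proof. induction l; constructor; auto. repeat split; apply Permutation_refl. Qed.

Lemma labCS_complete A : valid A -> labCS_provable A.
Proof.
  intros HA. exists (search_tree (init_state A)), 0. split; [split | reflexivity].
  - apply (preproof_coind (fun t => exists st, t = search_tree st /\ reachable A st));
      [| exists (init_state A); split; [reflexivity | constructor]].
    intros t [st [-> Hst]].
    destruct (search_step st) as [l|] eqn:E; [| exfalso; eapply reachable_not_stuck; eauto].
    rewrite children_search_tree, E. split.
    + exists (map fst l). split; [apply search_step_rule0, E |].
      rewrite map_map. apply Forall2_seq_perm_refl.
    + intros t' Ht'. apply in_map_iff in Ht' as [st' [<- H]].
      exists st'. split; [reflexivity | econstructor; eauto].
  - intros b Hb. eapply search_branch_progressing; eauto.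
Qed.

Theorem corollary2 : forall A : form, CS A <-> labCS_provable A.
Proof.
  intros A. split.
  - intros H. apply labCS_complete, CS_sound, H.
  - intros H. apply CS_complete, labCS_sound, H.
Qed.
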